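(* Let $\mathcal C$ be a sub-$\sigma$-algebra of $\mathcal F$, let $G(y;\omega)$ be a regular conditional distribution function of $X_1$ given $\mathcal C$ (so $G(\cdot;\omega)$ is a distribution function for each $\omega$ and $G(y;\cdot)=P(X_1\le y\mid\mathcal C)$ a.s.), and let $g(y)=P(\{\omega:G(y;\omega)=1\})$, $y\in\mathbb{R}$. If $g(\xi_p)<p$, then there exist $\delta,\varepsilon\in(0,1)$ such that for all $t\in\mathbb{R}$, $$\sup_{|y-\xi_p|\le\delta}E\big|E\{\exp(\iota tI(X_1\le y))\mid\mathcal C\}\big|\le1-(1-|\Psi_\varepsilon(t)|)\delta,$$ where $\Psi_a(t)=ae^{\iota t}+1-a$ for $a\in(0,1)$.
   Context: $X_1$ is a real random variable on $(\Omega,\mathcal F,P)$ with distribution function $F$; $p\in(0,1)$, $\xi_p=F^{-1}(p)=\inf\{x:F(x)\ge p\}$, and $F$ is continuous at $\xi_p$ (so $F(\xi_p)=p$). $\iota=\sqrt{-1}$, and $I(\cdot)$ denotes the indicator function. *)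

From HB Require Import structures.
From mathcomp Require Import all_boot all_order all_algebra.
From mathcomp Require Import all_classical all_reals all_analysis.
Set Implicit Arguments. Unset Strict Implicit. Unset Printing Implicit Defensive.
Import Order.TTheory GRing.Theory Num.Theory.
Import numFieldNormedType.Exports.
Local Open Scope classical_set_scope.
Local Open Scope ring_scope.

Section Defs.
Context {R : realType} {d : measure_display} {T : measurableType d}.

Definition is_sub_sigma_algebra (C : set (set T)) : Prop :=
  sigma_algebra setT C /\ (forall A, C A -> measurable A).

Definition C_measurable (C : set (set T)) (f : T -> R) : Prop :=
  forall B : set R, measurable B -> C (f @^-1` B).

Definition distr_fun (P : probability T R) (X : T -> R) (x : R) : R :=
  fine (P [set w | X w <= x]).

Definition quantile (F : R -> R) (p : R) : R := inf [set x | p <= F x].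

Definition is_distribution_function (H : R -> R) : Prop :=
  {homo H : x y / x <= y} /\
  (forall x, H x @[y --> x^'+] --> H x) /\
  (H @ -oo --> (0:R)) /\ (H @ +oo --> (1:R)).

Definition cond_exp_version (P : probability T R) (C : set (set T))
    (W Z : T -> R) : Prop :=
  C_measurable C Z /\ P.-integrable setT (EFin \o Z) /\
  forall A, C A -> (\int[P]_(w in A) (Z w)%:E = \int[P]_(w in A) (W w)%:E)%E.

Definition regular_cond_distr_fun (P : probability T R) (C : set (set T))
    (X : T -> R) (G : R -> T -> R) : Prop :=
  (forall w, is_distribution_function (fun y => G y w)) /\
  (forall y, cond_exp_version P C (fun w => (if X w <= y then 1 else 0)) (G y)).

Definition cmod (a b : R) : R := Num.sqrt (a ^+ 2 + b ^+ 2).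

(** |Psi_a(t)| where Psi_a(t) = a e^{it} + 1 - a *)
Definition Psi_abs (a t : R) : R := cmod (a * cos t + 1 - a) (a * sin t).

End Defs.

From HB Require Import structures.
From mathcomp Require Import all_boot all_order all_algebra.
From mathcomp Require Import all_classical all_reals all_analysis.
From mathcomp Require Import measurable_realfun ring lra.
Import Order.TTheory GRing.Theory Num.Theory.
Import numFieldNormedType.Exports.
Local Open Scope classical_set_scope.
Local Open Scope ring_scope.

(* The conditional expectation of exp(i t I(X_1 <= y)) given C is almost surely
   Psi_{G(y)}(t), so the left-hand side is E |Psi_{G(y)}(t)|.  Since
   |Psi_a(t)| <= 1, and |Psi_a(t)| <= |Psi_eps(t)| whenever eps <= a <= 1 - eps,
   it suffices that the band {eps <= G(y) <= 1 - eps} has probability at least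
   delta for all |y - xi_p| <= delta.  Pointwise,
     G(y) <= eps + I(G(xi_p) > 1 - 2 eps) + I(band) + (G(z) - G(xi_p)) / eps
   for y, xi_p <= z, and integrating gives a lower bound on the band's
   probability in terms of F(y), P(G(xi_p) > 1 - 2 eps) and F(z) - F(xi_p).
   The tail probability decreases to g(xi_p) < p <= F(xi_p) as eps -> 0, and F
   is continuous at xi_p, so the band keeps probability bounded away from 0. *)

Section real_functions.
Context {R : realType}.
Implicit Types (H F : R -> R) (a b c e p t : R).

Lemma distribution_function_ge0_le1 H : is_distribution_function H ->
  forall y, 0 <= H y <= 1.
Proof.
move=> [Hhomo [_ [H0 H1]]] y; apply/andP; split; rewrite leNgt; apply/negP.
- move=> /(cvgr_gt _ H0) /(filterI (nbhs_ninfty_le (num_real y))) /filter_ex.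
  by move=> [z [/Hhomo]]; rewrite leNgt => /negP.
- move=> /(cvgr_lt _ H1) /(filterI (nbhs_pinfty_ge (num_real y))) /filter_ex.
  by move=> [z [/Hhomo]]; rewrite leNgt => /negP.
Qed.

Lemma le_at_quantile F p : {homo F : x y / x <= y} ->
  (exists x, p <= F x) -> (exists x, F x < p) ->
  {for quantile F p, continuous F} -> p <= F (quantile F p).
Proof.
move=> Fhomo [x1 Fx1] [x0 Fx0] Fq.
have lbS : lbound [set x | p <= F x] x0.
  move=> x /= px; rewrite leNgt; apply/negP => /ltW /Fhomo.
  by rewrite leNgt (lt_le_trans Fx0 px).
rewrite leNgt; apply/negP => /(cvgr_lt _ Fq) /nbhs_ballP [e /= e0 Fe].
have [x /= Sx xe] := inf_adherent e0 (conj (ex_intro _ x1 Fx1) (ex_intro _ x0 lbS)).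
have qx : quantile F p <= x by apply: ge_inf; [exists x0|].
have /Fe /= : ball (quantile F p) e x.
  by rewrite /ball /= distrC ger0_norm ?subr_ge0 // -/(quantile F p) ltrBlDl.
lra.
Qed.

Lemma Psi_abs_sqr a t : (a * cos t + 1 - a) ^+ 2 + (a * sin t) ^+ 2
  = 1 - 2 * (a * (1 - a)) * (1 - cos t).
Proof. by rewrite exprMn sin2cos2; ring. Qed.

Lemma Psi_abs_le1 a t : 0 <= a <= 1 -> Psi_abs a t <= 1.
Proof.
move=> a01; rewrite /Psi_abs /cmod Psi_abs_sqr -[leRHS]sqrtr1 ler_sqrt //.
have := cos_le1 t; have : 0 <= a * (1 - a) by apply: mulr_ge0; lra.
nra.
Qed.

(* |Psi_a(t)|^2 decreases in a (1 - a), which on [e, 1 - e] is smallest at a = e. *)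
Lemma Psi_abs_le_band a e t : e <= a <= 1 - e -> Psi_abs a t <= Psi_abs e t.
Proof.
move=> ae; rewrite /Psi_abs /cmod !Psi_abs_sqr ler_sqrt; last first.
  by rewrite -Psi_abs_sqr addr_ge0 // sqr_ge0.
have := cos_le1 t; have : e * (1 - e) <= a * (1 - a) by nra.
nra.
Qed.

(* Either b < e, or b lies in the band [e, 1 - e], or b > 1 - e; in the last
   case a lies in the tail (1 - 2 e, oo) unless c - a > e. *)
Lemma le_tail_band_increment e a b c iA iM : 0 < e -> b <= 1 -> a <= c -> b <= c ->
  0 <= iA -> 0 <= iM -> (1 - 2 * e < a -> iA = 1) -> (e <= b <= 1 - e -> iM = 1) ->
  b <= e + (iA + iM) + e^-1 * (c - a).
Proof.
move=> e0 b1 ac bc iA0 iM0 hA hM.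
have cae : 0 <= e^-1 * (c - a) by rewrite mulr_ge0 ?invr_ge0; lra.
have [Mb|] := boolP (e <= b <= 1 - e); first by rewrite hM //; lra.
rewrite negb_and -!ltNge => /orP[|b1e]; first lra.
have [Aa|] := boolP (1 - 2 * e < a); first by rewrite hA //; lra.
rewrite -leNgt => a2e; have : 1 <= e^-1 * (c - a).
  by rewrite ler_pdivlMl // mulr1; lra.
lra.
Qed.

End real_functions.

Section probability_real.
Context {R : realType} {d : measure_display} {T : measurableType d}.
Variable P : probability T R.

Definition prob (A : set T) : R := fine (P A).

Lemma probE (A : set T) : measurable A -> P A = (prob A)%:E.
Proof. by move=> mA; rewrite /prob fineK // fin_num_measure. Qed.

Lemma le_prob (A B : set T) : measurable A -> measurable B -> A `<=` B ->
  prob A <= prob B.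
Proof.
by move=> mA mB AB; rewrite -lee_fin -!probE //; apply: le_measure; rewrite ?inE.
Qed.

Lemma nonincreasing_cvg_prob (E : (set T)^nat) : (forall n, measurable (E n)) ->
  (forall n m, (n <= m)%N -> E m `<=` E n) ->
  prob \o E @ \oo --> prob (\bigcap_n E n).
Proof.
move=> mE dE; have mI : measurable (\bigcap_n E n) by exact: bigcapT_measurable.
have : P \o E @ \oo --> P (\bigcap_n E n).
  apply: nonincreasing_cvg_mu => //; first by rewrite /= (probE _ (mE 0%N)) ltry.
  by move=> n m nm; apply/subsetPset; exact: dE.
by rewrite (probE _ mI) => /fine_cvg.
Qed.

Lemma nondecreasing_cvg_prob (E : (set T)^nat) : (forall n, measurable (E n)) ->
  (forall n m, (n <= m)%N -> E n `<=` E m) ->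
  prob \o E @ \oo --> prob (\bigcup_n E n).
Proof.
move=> mE iE; have mU : measurable (\bigcup_n E n) by exact: bigcupT_measurable.
have : P \o E @ \oo --> P (\bigcup_n E n).
  by apply: nondecreasing_cvg_mu => // n m nm; apply/subsetPset; exact: iE.
by rewrite (probE _ mU) => /fine_cvg.
Qed.

Lemma integrable_bounded (f : T -> R) (M : R) : measurable_fun setT f ->
  (forall w, `|f w| <= M) -> P.-integrable setT (EFin \o f).
Proof.
move=> mf fM; apply: measurable_bounded_integrable => //.
  by rewrite ltey_eq fin_num_measure.
exists M; split; first exact: num_real.
by move=> N MN w _; exact: le_trans (fM w) (ltW MN).
Qed.

Lemma Rintegral_indic (A : set T) : measurable A -> \int[P]_w \1_A w = prob A.
Proof. by move=> mA; rewrite /Rintegral integral_indic // setIT. Qed.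

Lemma Rintegral_cst_prob (r : R) : \int[P]_w r = r.
Proof. by rewrite /Rintegral integral_cst //= probability_setT mule1. Qed.

Lemma EFin_Rintegral (f : T -> R) : P.-integrable setT (EFin \o f) ->
  (\int[P]_w f w)%:E = (\int[P]_w (f w)%:E)%E.
Proof. by move=> fi; rewrite fineK // integrable_fin_num. Qed.

Local Open Scope ereal_scope.

Lemma integral_affine (A : set T) (f : T -> R) (a b : R) : measurable A ->
  P.-integrable A (EFin \o f) ->
  \int[P]_(w in A) (a + b * f w)%:E = a%:E * P A + b%:E * \int[P]_(w in A) (f w)%:E.
Proof.
move=> mA fi; under eq_integral => w _ do rewrite EFinD EFinM.
rewrite integralD //; last exact: integrableZl.
  by rewrite integral_cst // integralZl.
exact: finite_measure_integrable_cst.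
Qed.

Lemma integrable_affine (A : set T) (f : T -> R) (a b : R) : measurable A ->
  P.-integrable A (EFin \o f) -> P.-integrable A (fun w => (a + b * f w)%:E).
Proof.
by move=> mA fi; exact: (integrableD mA (finite_measure_integrable_cst P a mA)
  (integrableZl mA b fi)).
Qed.

End probability_real.

Section measurability.
Context {R : realType} {d : measure_display} {T : measurableType d}.

Lemma measurable_bool_set (b : T -> bool) : measurable_fun setT b ->
  measurable [set w | b w].
Proof. by move=> mb; have := mb measurableT [set true] I; rewrite setTI. Qed.

Lemma measurable_cmod (f g : T -> R) : measurable_fun setT f -> measurable_fun setT g ->
  measurable_fun setT (fun w => cmod (f w) (g w)).
Proof.
move=> mf mg; apply: (@measurableT_comp _ _ _ _ _ _ (@Num.sqrt R)).
  exact: continuous_measurable_fun (@sqrt_continuous R).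
by apply: measurable_funD; exact: measurable_funX.
Qed.

End measurability.

Section conditional_expectation.
Context {R : realType} {d : measure_display} {T : measurableType d}.
Context {P : probability T R} {C : set (set T)}.
Hypothesis subC : is_sub_sigma_algebra C.

Lemma C_measurableP (f : T -> R) :
  C_measurable C f <-> @measurable_fun _ _ (g_sigma_algebraType C) R setT f.
Proof.
have [sC _] := subC; split => [Cf _ B mB|Cf B mB].
- by rewrite setTI /measurable /= (sigma_algebra_id sC); exact: Cf.
- by have := Cf measurableT B mB; rewrite setTI /measurable /= (sigma_algebra_id sC).
Qed.

Lemma sub_sigma_algebraT : C setT.
Proof. by have [[C0 CD _] _] := subC; rewrite -(setD0 setT); exact: CD. Qed.

Lemma C_measurable_measurable {f : T -> R} :
  C_measurable C f -> measurable_fun setT f.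
Proof. by move=> Cf _ B mB; rewrite setTI; apply: subC.2; exact: Cf. Qed.

Lemma C_measurable_affine (f : T -> R) (a b : R) :
  C_measurable C f -> C_measurable C (fun w => a + b * f w).
Proof.
move=> /C_measurableP mf; apply/C_measurableP.
by apply: measurable_funD => //; exact: measurable_funM.
Qed.

Local Open Scope ereal_scope.

(* The integral of |Z1 - Z2| splits over the C-sets {Z1 >= Z2} and {Z1 < Z2},
   on each of which the integral of Z1 - Z2 vanishes. *)
Lemma C_integral_eq_ae_eq (Z1 Z2 : T -> R) :
  C_measurable C Z1 -> C_measurable C Z2 ->
  P.-integrable setT (EFin \o Z1) -> P.-integrable setT (EFin \o Z2) ->
  (forall A, C A -> \int[P]_(w in A) (Z1 w)%:E = \int[P]_(w in A) (Z2 w)%:E) ->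
  ae_eq P setT (EFin \o Z1) (EFin \o Z2).
Proof.
move=> /C_measurableP m1 /C_measurableP m2 i1 i2 eqA.
have [_ CS] := subC.
pose D w := (Z1 w - Z2 w)%R.
have CD : C_measurable C D by apply/C_measurableP; exact: measurable_funB.
have [Cp Cn] : C (D @^-1` `[0%R, +oo[) /\ C (D @^-1` `]-oo, 0%R[).
  by split; apply: CD.
have [mp mn] := (CS _ Cp, CS _ Cn).
have integral_sub0 A (f g : T -> R) : C A -> P.-integrable setT (EFin \o f) ->
    P.-integrable setT (EFin \o g) ->
    \int[P]_(w in A) (f w)%:E = \int[P]_(w in A) (g w)%:E ->
    \int[P]_(w in A) (f w - g w)%:E = 0.
  move=> /CS mA fi gi fg; have sA := subsetT A.
  under eq_integral do rewrite EFinB.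
  rewrite integralB_EFin //; [|exact: integrableS fi|exact: integrableS gi].
  by rewrite fg subee // integrable_fin_num //; exact: integrableS gi.
have mD : measurable_fun setT (EFin \o D).
  exact/measurable_EFinP/(C_measurable_measurable CD).
have : \int[P]_w `|(D w)%:E| = 0.
  have DT : D @^-1` `[0%R, +oo[ `|` D @^-1` `]-oo, 0%R[ = setT.
    apply/seteqP; split => // w _ /=; rewrite !in_itv /= andbT.
    by case: leP; [left|right].
  rewrite -DT ge0_integral_setU //; last 2 first.
  - by rewrite DT; exact: measurableT_comp.
  - apply/disj_setPS => w [] /=; rewrite !in_itv /= andbT => /le_lt_trans /[apply].
    by rewrite ltxx.
  rewrite (eq_integral (fun w => (Z1 w - Z2 w)%:E)); last first.
    by move=> w /set_mem /=; rewrite in_itv /= andbT => Dp; rewrite ger0_norm.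
  rewrite [X in _ + X](eq_integral (fun w => (Z2 w - Z1 w)%:E)); last first.
    by move=> w /set_mem /=; rewrite in_itv /= => Dn; rewrite ltr0_norm // opprB.
  by rewrite !integral_sub0 ?adde0 //; rewrite eqA.
move=> /(ae_eq_integral_abs P measurableT mD).1.
apply: filterS => w /= D0 _; move: (D0 I) => [] /eqP.
by rewrite subr_eq0 => /eqP ->.
Qed.
Local Close Scope ereal_scope.

Lemma cond_exp_version_ae_eq {W Z1 Z2 : T -> R} :
  cond_exp_version P C W Z1 -> cond_exp_version P C W Z2 ->
  ae_eq P setT (EFin \o Z1) (EFin \o Z2).
Proof.
move=> [m1 [i1 e1]] [m2 [i2 e2]]; apply: C_integral_eq_ae_eq => // A CA.
by rewrite e1 // e2.
Qed.

Lemma cond_exp_version_affine {W Z : T -> R} (a b : R) :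
  P.-integrable setT (EFin \o W) -> cond_exp_version P C W Z ->
  cond_exp_version P C (fun w => a + b * W w) (fun w => a + b * Z w).
Proof.
move=> Wi [mZ [Zi eZ]]; split; first exact: C_measurable_affine.
split; first exact: integrable_affine.
move=> A CA; have mA := subC.2 _ CA; have sA := subsetT A.
rewrite !integral_affine ?eZ //; [exact: integrableS Wi | exact: integrableS Zi].
Qed.

End conditional_expectation.

Section distribution_of_random_variable.
Context {R : realType} {d : measure_display} {T : measurableType d}.
Variables (P : probability T R) (X : T -> R).
Hypothesis mX : measurable_fun setT X.

Lemma distr_fun_homo : {homo distr_fun P X : y z / y <= z}.
Proof.
move=> y z yz; apply: le_prob; try exact/measurable_bool_set/measurable_fun_ler.
by move=> w /= /le_trans; apply.
Qed.

Lemma distr_fun_ge p : p < 1 -> exists y, p <= distr_fun P X y.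
Proof.
move=> p1; pose E n := [set w | X w <= n%:R].
have : prob P \o E @ \oo --> prob P (\bigcup_n E n).
  apply: nondecreasing_cvg_prob => [n|n m nm w /= /le_trans].
    exact/measurable_bool_set/measurable_fun_ler.
  by apply; rewrite ler_nat.
have -> : \bigcup_n E n = setT.
  apply/seteqP; split => // w _; exists (Num.truncn `|X w|).+1 => //=.
  exact/ltW/(le_lt_trans (ler_norm _) (truncnS_gt _)).
rewrite /prob probability_setT => /cvgr_gt /(_ _ p1) /filter_ex [n pn].
by exists n%:R; exact: ltW.
Qed.

Lemma distr_fun_lt p : 0 < p -> exists y, distr_fun P X y < p.
Proof.
move=> p0; pose E n := [set w | X w <= - n%:R].
have : prob P \o E @ \oo --> prob P (\bigcap_n E n).
  apply: nonincreasing_cvg_prob => [n|n m nm w /= /le_trans].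
    exact/measurable_bool_set/measurable_fun_ler.
  by apply; rewrite lerN2 ler_nat.
have -> : \bigcap_n E n = set0.
  apply/seteqP; split => // w /(_ (Num.truncn `|X w|).+1 I); rewrite /E /= => Xw.
  by have := truncnS_gt `|X w|; have := ler_norm (- X w); rewrite normrN; lra.
rewrite [prob P set0]/prob measure0 => /cvgr_lt /(_ _ p0) /filter_ex [n pn].
by exists (- n%:R).
Qed.

End distribution_of_random_variable.

Section rcdf_sets.
Context {R : realType} {T : Type}.
Variable G : R -> T -> R.

Definition rcdf_tail (e x : R) := [set w | 1 - e < G x w].
Definition rcdf_band (e y : R) := [set w | e <= G y w <= 1 - e].

End rcdf_sets.

Section regular_conditional_distribution.
Context {R : realType} {d : measure_display} {T : measurableType d}.
Context {P : probability T R} {X : T -> R} {C : set (set T)} {G : R -> T -> R}.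
Hypotheses (mX : measurable_fun setT X) (subC : is_sub_sigma_algebra C)
  (rcdG : regular_cond_distr_fun P C X G).

Lemma rcdf_ge0_le1 y w : 0 <= G y w <= 1.
Proof. exact: distribution_function_ge0_le1 (rcdG.1 w) y. Qed.

Lemma rcdf_homo w : {homo G^~ w : y z / y <= z}.
Proof. exact: (rcdG.1 w).1. Qed.

Lemma rcdf_measurable y : measurable_fun setT (G y).
Proof. exact: (C_measurable_measurable subC (rcdG.2 y).1). Qed.

Lemma rcdf_integrable y : P.-integrable setT (EFin \o G y).
Proof. exact: (rcdG.2 y).2.1. Qed.

Lemma Rintegral_rcdf y : \int[P]_w G y w = distr_fun P X y.
Proof.
have mXy : measurable [set w | X w <= y].
  exact/measurable_bool_set/measurable_fun_ler.
have [_ [_ GX]] := rcdG.2 y; rewrite /Rintegral (GX _ (sub_sigma_algebraT subC)).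
rewrite -[RHS]/(prob P [set w | X w <= y]) -Rintegral_indic //.
congr fine; apply: eq_integral => w _.
by rewrite indicE; case: ifPn => Xw; [rewrite mem_set | rewrite memNset //; exact/negP].
Qed.

Lemma measurable_rcdf_tail e x : measurable (rcdf_tail G e x).
Proof. exact/measurable_bool_set/measurable_fun_ltr/rcdf_measurable. Qed.

Lemma measurable_rcdf_band e y : measurable (rcdf_band G e y).
Proof.
by apply/measurable_bool_set/measurable_and; apply: measurable_fun_ler => //;
  exact: rcdf_measurable.
Qed.

Lemma measurable_rcdf_eq1 x : measurable [set w | G x w = 1].
Proof.
by have := rcdf_measurable x measurableT [set 1] (measurable_set1 1); rewrite setTI.
Qed.

Lemma cvg_prob_rcdf_tail x :
  prob P (rcdf_tail G n.+1%:R^-1 x) @[n --> \oo] --> prob P [set w | G x w = 1].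
Proof.
have -> : [set w | G x w = 1] = \bigcap_n rcdf_tail G n.+1%:R^-1 x.
  apply/seteqP; split => w /=.
    by move=> Gx1 n _; rewrite /rcdf_tail /= Gx1 ltrBlDr ltrDl invr_gt0.
  move=> Gx; apply/eqP; rewrite eq_le (andP (rcdf_ge0_le1 x w)).2 /= leNgt.
  apply/negP; rewrite -subr_gt0 => /PosNum/near_infty_natSinv_lt/filter_ex[n /= n1x].
  by have := ltrD n1x (Gx n I); rewrite subrKC subrK ltxx.
apply: nonincreasing_cvg_prob => [n|n m nm w /=]; first exact: measurable_rcdf_tail.
rewrite /rcdf_tail /= => /(le_lt_trans _); apply; rewrite lerD2l lerN2.
by rewrite lef_pV2 ?posrE // ler_nat.
Qed.

Lemma exists_rcdf_tail_lt x q c : prob P [set w | G x w = 1] < q -> 0 < c ->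
  exists e, [/\ 0 < e, e <= 1/2, e < c & prob P (rcdf_tail G (2 * e) x) < q].
Proof.
move=> gq c0; have c20 : 0 < c * 2 by rewrite mulr_gt0.
have [n [tailq nc]] := filter_ex (filterI (cvgr_lt _ (cvg_prob_rcdf_tail x) _ gq)
  (near_infty_natSinv_lt (PosNum c20))).
exists (n.+1%:R^-1 / 2); rewrite (mulrC 2) divfK // ltr_pdivrMr //; split => //.
by rewrite ler_pM2r // invf_le1 // ler1n.
Qed.

Lemma distr_fun_le_tail_band e x y z : 0 < e -> x <= z -> y <= z ->
  distr_fun P X y <= e + (prob P (rcdf_tail G (2 * e) x) + prob P (rcdf_band G e y))
                     + e^-1 * (distr_fun P X z - distr_fun P X x).
Proof.
move=> e0 xz yz; set A := rcdf_tail G _ x; set M := rcdf_band G e y.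
have mA : measurable A := measurable_rcdf_tail _ _.
have mM : measurable M := measurable_rcdf_band _ _.
have iAM : P.-integrable setT (EFin \o fun w => \1_A w + \1_M w).
  exact: (integrableD measurableT (integrable_indic P mA) (integrable_indic P mM)).
have iGzx : P.-integrable setT (EFin \o fun w => G z w - G x w).
  exact: (integrableB measurableT (rcdf_integrable z) (rcdf_integrable x)).
have ie := finite_measure_integrable_cst P e measurableT.
have ieAM : P.-integrable setT (EFin \o fun w => e + (\1_A w + \1_M w)).
  exact: (integrableD measurableT ie iAM).
have iRHS : P.-integrable setT
    (EFin \o fun w => e + (\1_A w + \1_M w) + e^-1 * (G z w - G x w)).
  exact: (integrableD measurableT ieAM (integrableZl measurableT e^-1 iGzx)).
have pt w : setT w -> G y w <= e + (\1_A w + \1_M w) + e^-1 * (G z w - G x w).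
  move=> _; have /andP[_ Gy1] := rcdf_ge0_le1 y w.
  apply: (le_tail_band_increment _ _ _ _ _ _ e0 Gy1
    (rcdf_homo w _ _ xz) (rcdf_homo w _ _ yz));
    try by rewrite indicE ler0n.
  - by move=> Aw; rewrite indicE mem_set.
  - by move=> Mw; rewrite indicE mem_set.
rewrite -[distr_fun P X y]Rintegral_rcdf.
apply: le_trans (le_Rintegral measurableT (rcdf_integrable y) iRHS pt) _.
rewrite !RintegralD ?integrable_indic //;
  last exact: (integrableZl measurableT e^-1 iGzx).
rewrite Rintegral_cst_prob RintegralZl // RintegralB ?rcdf_integrable //.
by rewrite !Rintegral_indic // !Rintegral_rcdf.
Qed.

Lemma measurable_Psi_abs_rcdf t y : measurable_fun setT (fun w => Psi_abs (G y w) t).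
Proof.
have mGy := rcdf_measurable y.
apply: measurable_cmod; last exact: measurable_funM.
by apply: measurable_funB => //; apply: measurable_funD => //; exact: measurable_funM.
Qed.

Lemma integrable_Psi_abs_rcdf t y :
  P.-integrable setT (EFin \o fun w => Psi_abs (G y w) t).
Proof.
apply: (integrable_bounded P _ 1 (measurable_Psi_abs_rcdf t y)) => w.
by rewrite ger0_norm ?sqrtr_ge0 // Psi_abs_le1 // rcdf_ge0_le1.
Qed.

Lemma integral_cmod_cond_exp t y (Zr Zi : T -> R) :
  cond_exp_version P C (fun w => cos (t * (if X w <= y then 1 else 0))) Zr ->
  cond_exp_version P C (fun w => sin (t * (if X w <= y then 1 else 0))) Zi ->
  (\int[P]_w (cmod (Zr w) (Zi w))%:E = \int[P]_w (Psi_abs (G y w) t)%:E)%E.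
Proof.
pose ind w : R := if X w <= y then 1 else 0.
have iI : P.-integrable setT (EFin \o ind).
  apply: (integrable_bounded P _ 1).
    by apply: measurable_fun_ifT => //; exact: measurable_fun_ler.
  by move=> w; rewrite /ind; case: ifP; rewrite ?normr1 ?normr0.
have -> : (fun w => cos (t * ind w)) = (fun w => 1 + (cos t - 1) * ind w).
  by apply/funext => w; rewrite /ind; case: ifP => _; rewrite ?mulr1 ?mulr0 ?cos0; ring.
have -> : (fun w => sin (t * ind w)) = (fun w => 0 + sin t * ind w).
  by apply/funext => w; rewrite /ind; case: ifP => _; rewrite ?mulr1 ?mulr0 ?sin0; ring.
move=> Zrv Ziv.
have Zr_ae := cond_exp_version_ae_eq subC Zrv
  (cond_exp_version_affine subC 1 (cos t - 1) iI (rcdG.2 y)).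
have Zi_ae := cond_exp_version_ae_eq subC Ziv
  (cond_exp_version_affine subC 0 (sin t) iI (rcdG.2 y)).
apply: ae_eq_integral => //.
- apply/measurable_EFinP/measurable_cmod.
  + exact: (C_measurable_measurable subC Zrv.1).
  + exact: (C_measurable_measurable subC Ziv.1).
- exact/measurable_EFinP/measurable_Psi_abs_rcdf.
apply: filterS2 Zr_ae Zi_ae => w Zrw Ziw _; move: (Zrw I) (Ziw I) => /= [->] [->].
by congr EFin; rewrite /Psi_abs; congr cmod; ring.
Qed.

Lemma Rintegral_Psi_abs_rcdf_le e t y : 0 <= e <= 1 ->
  \int[P]_w Psi_abs (G y w) t <= 1 - (1 - Psi_abs e t) * prob P (rcdf_band G e y).
Proof.
move=> e01; set M := rcdf_band G e y.
have mM : measurable M := measurable_rcdf_band _ _.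
have i1 := finite_measure_integrable_cst P 1 measurableT.
have iM : P.-integrable setT (EFin \o fun w => (Psi_abs e t - 1) * \1_M w).
  exact: (integrableZl measurableT _ (integrable_indic P mM)).
have iRHS : P.-integrable setT (EFin \o fun w => 1 + (Psi_abs e t - 1) * \1_M w).
  exact: (integrableD measurableT i1 iM).
have pt w : setT w -> Psi_abs (G y w) t <= 1 + (Psi_abs e t - 1) * \1_M w.
  move=> _; rewrite indicE; case: (boolP (w \in M)) => [/set_mem Mw|_].
  - by rewrite mulr1 addrC subrK; exact: Psi_abs_le_band.
  - by rewrite mulr0 addr0 Psi_abs_le1 // rcdf_ge0_le1.
apply: le_trans (le_Rintegral measurableT (integrable_Psi_abs_rcdf t y) iRHS pt) _.
rewrite RintegralD // Rintegral_cst_prob RintegralZl ?integrable_indic //.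
by rewrite Rintegral_indic // -mulNr opprB.
Qed.

(* With p = g + 3 eta and e < eta / 8, the bound of distr_fun_le_tail_band
   leaves the band a mass above eta - e eta - e > e >= delta. *)
Lemma exists_rcdf_band_mass xi p :
  p <= distr_fun P X xi -> {for xi, continuous (distr_fun P X)} ->
  prob P [set w | G xi w = 1] < p ->
  exists delta e, [/\ 0 < delta <= e, e <= 1/2 &
    forall y, `|y - xi| <= delta -> delta <= prob P (rcdf_band G e y)].
Proof.
set F := distr_fun P X; set g := prob P _ => pF cF gp.
have [eta eta0 peta] : exists2 eta, 0 < eta & p = g + 3 * eta.
  by exists ((p - g) / 3); lra.
have gq : g < g + eta by rewrite ltrDl.
have eta8 : 0 < eta / 8 by rewrite divr_gt0.
have [e [e0 e12 e_eta tail_lt]] := exists_rcdf_tail_lt _ _ _ gq eta8.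
have /nbhs_ballP[r /= r0 Fr] : \forall x \near xi, `|F xi - F x| < e * eta.
  exact: (@cvgr_dist_lt _ _ _ _ _ F (F xi) cF _ (mulr_gt0 e0 eta0)).
pose delta := Num.min e (r / 2).
have [delta0 delta_e delta_r] : [/\ 0 < delta, delta <= e & delta <= r / 2].
  by rewrite lt_min e0 divr_gt0 //= !ge_min !lexx orbT.
exists delta, e; split => //; first by rewrite delta0.
move=> y; rewrite ler_norml => /andP[yl yr].
have Fnear x : `|xi - x| < r -> F xi - e * eta < F x < F xi + e * eta.
  by move=> /(Fr x) /=; rewrite ltr_norml => /andP[? ?]; apply/andP; split; lra.
have /andP[Fy _] : F xi - e * eta < F y < F xi + e * eta.
  by apply: Fnear; rewrite ltr_norml; apply/andP; split; lra.
have /andP[_ Fz] : F xi - e * eta < F (xi + delta) < F xi + e * eta.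
  by apply: Fnear; rewrite ltr_norml; apply/andP; split; lra.
have Fz' : e^-1 * (F (xi + delta) - F xi) < eta.
  by rewrite mulrC ltr_pdivrMr // mulrC; lra.
have [xz yz] : xi <= xi + delta /\ y <= xi + delta by split; lra.
have := distr_fun_le_tail_band e xi y (xi + delta) e0 xz yz; rewrite -/F => Fy_le.
have : e * eta <= eta / 2 by nra.
lra.
Qed.

End regular_conditional_distribution.

Theorem lemma3p3 (R : realType) (d : measure_display) (T : measurableType d)
  (P : probability T R) (X : T -> R) (p : R)
  (C : set (set T)) (G : R -> T -> R) :
  measurable_fun setT X ->
  0 < p < 1 ->
  {for quantile (distr_fun P X) p, continuous (distr_fun P X)} ->
  is_sub_sigma_algebra C ->
  regular_cond_distr_fun P C X G ->
  (P [set w | G (quantile (distr_fun P X) p) w = 1%R] < p%:E)%E ->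
  exists delta eps : R,
    (0 < delta < 1) /\ (0 < eps < 1) /\
    forall t y : R, `|y - quantile (distr_fun P X) p| <= delta ->
      forall Zr Zi : T -> R,
        cond_exp_version P C (fun w => cos (t * (if X w <= y then 1 else 0))) Zr ->
        cond_exp_version P C (fun w => sin (t * (if X w <= y then 1 else 0))) Zi ->
        (\int[P]_w (cmod (Zr w) (Zi w))%:E
           <= (1 - (1 - Psi_abs eps t) * delta)%R%:E)%E.
Proof.
set xi := quantile _ p => mX /andP[p0 p1] cF subC rcdG.
rewrite probE; last exact: measurable_rcdf_eq1 subC rcdG xi.
rewrite lte_fin => g_lt_p.
have pF : p <= distr_fun P X xi.
  apply: le_at_quantile cF; first exact: distr_fun_homo.
  - exact: distr_fun_ge.
  - exact: distr_fun_lt.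
have [delta [e [/andP[delta0 delta_e] e12 band_mass]]] :=
  exists_rcdf_band_mass mX subC rcdG _ _ pF cF g_lt_p.
exists delta, e; split; first by apply/andP; split; lra.
split; first by apply/andP; split; lra.
move=> t y yxi Zr Zi Zrv Ziv.
rewrite (integral_cmod_cond_exp mX subC rcdG _ _ _ _ Zrv Ziv).
rewrite -EFin_Rintegral; last exact: integrable_Psi_abs_rcdf subC rcdG t y.
rewrite lee_fin.
have Psi1 : Psi_abs e t <= 1 by apply: Psi_abs_le1; lra.
apply: le_trans (Rintegral_Psi_abs_rcdf_le subC rcdG e t y _) _; first lra.
by rewrite lerD2l lerN2 ler_wpM2l ?subr_ge0 ?band_mass.
Qed.
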